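(* Let $x_1,\dots,x_n$ be i.i.d. uniform random variables on $[0,1]$. For any $\gamma,\gamma',\delta\in(0,1)$, with probability at least $1-\delta$, $$\mathsf{Q}^+_\gamma\Big(\frac1n\sum_{i=1}^n\delta_{x_i}\Big)-\gamma\le\min_{\varepsilon\in(0,1)}\Big\{(1-\varepsilon)^{-1}\Big[\varepsilon|\gamma-\gamma'|+\sqrt{\frac{2\gamma'(1-\gamma')\log(1/\delta)}{n}}+\Big(\frac23+\frac1{2\varepsilon}\Big)\frac{\log(1/\delta)}{n}\Big]\Big\}.$$ The same upper bound also holds for $\gamma-\mathsf{Q}^-_\gamma\big(\frac1n\sum_{i=1}^n\delta_{x_i}\big)$ with probability at least $1-\delta$.
   Context: For a probability distribution with CDF $F$ and $\gamma\in(0,1)$: $\mathsf{Q}^-_\gamma(F)=\inf\{x:F(x)\ge\gamma\}$ and $\mathsf{Q}^+_\gamma(F)=\inf\{x:F(x)>\gamma\}$. $\delta_x$ is the Dirac measure at $x$. *)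

From HB Require Import structures.
From mathcomp Require Import all_boot all_order all_algebra.
From mathcomp Require Import all_classical all_reals all_analysis.
Set Implicit Arguments. Unset Strict Implicit. Unset Printing Implicit Defensive.
Import Order.TTheory GRing.Theory Num.Theory.
Local Open Scope classical_set_scope.
Local Open Scope ring_scope.

Definition Qminus (R : realType) (g : R) (F : R -> R) : R :=
  inf [set x | g <= F x].
Definition Qplus (R : realType) (g : R) (F : R -> R) : R :=
  inf [set x | g < F x].

(* CDF of the empirical measure (1/n) sum_i delta_{xs i}. *)
Definition emp_cdf (R : realType) (n : nat) (xs : 'I_n -> R) (x : R) : R :=
  n%:R^-1 * \sum_(i < n) (if xs i <= x then 1 else 0).

(* Mutual independence of a finite family of real random variables:
   product rule for every family of Borel sets (taking B i = setT recovers
   every subfamily). *)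
Definition mutually_independent d (T : measurableType d) (R : realType)
    (P : probability T R) (n : nat) (X : 'I_n -> T -> R) : Prop :=
  forall B : 'I_n -> set R, (forall i, measurable (B i)) ->
    P (\bigcap_(i in setT) (X i @^-1` B i)) =
    (\prod_(i < n) P (X i @^-1` B i))%E.

(* Both deviations are statements about how many sample points fall on one
   side of a threshold: [Qplus g <= g + b] iff fewer than [n (1 - g)] points
   exceed [g + b], and [g - b <= Qminus g] iff fewer than [n g] points lie
   below [g - b]. Such a count is binomial with success probability
   [p = (s - b)^+], [s] being [1 - g] or [g], so each failure event is the
   upper tail [P(Bin(n, p) >= n (p + b))]. A Chernoff bound, combined with
   [e^x <= 1 + x + x^2 / (2 (1 - x/3))] on [[0, 3)], gives Bernstein's bound
   [exp (- n b^2 / (2 p (1 - p) + 2 b / 3))] for it. Finally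
   [p (1 - p) <= g' (1 - g') + |g - g'| + b], and every value of the
   minimised expression, hence also its infimum [b], satisfies
   [b^2 >= 2 K (g' (1 - g') + |g - g'| + b + b / 3)] with
   [K = log (1 / delta) / n], which makes the Bernstein bound at most [delta]. *)

From HB Require Import structures.
From mathcomp Require Import all_boot all_order all_algebra.
From mathcomp Require Import all_classical all_reals all_analysis.
From mathcomp Require Import ring lra.
Set Implicit Arguments. Unset Strict Implicit. Unset Printing Implicit Defensive.
Import Order.TTheory GRing.Theory Num.Theory.
Local Open Scope ring_scope.

Section exp_bounds.
Variable R : realType.
Implicit Types x y r : R.

Lemma pow3_le_fact k : (2 * 3 ^ k <= k.+2`!)%N.
Proof. by elim: k => [//|k IH]; rewrite factS expnS mulnCA leq_mul. Qed.

Lemma sum_geom_le_inv r k : 0 <= r < 1 -> \sum_(i < k) r ^+ i <= (1 - r)^-1.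
Proof.
move=> /andP[r0 r1]; have r1' : 0 < 1 - r by rewrite subr_gt0.
elim: k => [|k IH]; first by rewrite big_ord0 invr_ge0 ltW.
rewrite big_ord_recl expr0; under eq_bigr do rewrite exprS.
have -> : (1 - r)^-1 = 1 + r * (1 - r)^-1 by field; rewrite gt_eqF.
by rewrite -mulr_sumr lerD2l ler_wpM2l.
Qed.

Lemma series_exp_coeff_le x k : 0 <= x -> x < 3 ->
  series (exp_coeff x) k.+2 <= 1 + x + x ^+ 2 / 2 * \sum_(i < k) (x / 3) ^+ i.
Proof.
move=> x0 x3; elim: k => [|k IH].
  rewrite /series /= big_mkord !big_ord_recr big_ord0 /= big_ord0.
  by rewrite /exp_coeff /= add0r expr0 expr1 !divr1 mulr0 addr0.
rewrite /series /= big_nat_recr //= -/(series _ _) big_ord_recr /= mulrDr addrA.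
rewrite lerD // /exp_coeff /=.
have -> : x ^+ 2 / 2 * (x / 3) ^+ k = x ^+ k.+2 / (2 * 3 ^ k)%:R.
  by rewrite natrM natrX exprMn exprVn !exprS; field; rewrite expf_neq0.
by rewrite ler_wpM2l ?exprn_ge0 // lef_pV2 ?posrE ?ltr0n ?fact_gt0
  ?muln_gt0 ?expn_gt0 // ler_nat pow3_le_fact.
Qed.

(* Since [k! >= 2 * 3^(k-2)], the exponential series is dominated by a geometric one. *)
Lemma expR_le_bernstein x : 0 <= x -> x < 3 ->
  expR x <= 1 + x + x ^+ 2 / (2 * (1 - x / 3)).
Proof.
move=> x0 x3; apply: limr_le; first exact: is_cvg_series_exp_coeff.
near=> m; have [k ->] : exists k, m = k.+2.
  by exists m.-2; rewrite -subn2 -addn2 subnK //; near: m; exists 2%N.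
apply: (le_trans (series_exp_coeff_le k x0 x3)).
have r01 : 0 <= x / 3 < 1 by apply/andP; split; lra.
rewrite invfM mulrA lerD2l ler_wpM2l ?sum_geom_le_inv //.
by rewrite divr_ge0 ?exprn_ge0.
Unshelve. all: by end_near.
Qed.

Lemma series_exp_coeff_le_expR x m : 0 <= x -> series (exp_coeff x) m <= expR x.
Proof.
move=> x0; apply: limr_ge; first exact: is_cvg_series_exp_coeff.
near=> k; have mk : (m <= k)%N by near: k; exists m.
rewrite /series /= (big_cat_nat (leq0n m) mk) /= lerDl.
by apply: sumr_ge0 => i _; rewrite /exp_coeff /= divr_ge0 // exprn_ge0.
Unshelve. all: by end_near.
Qed.

(* [1 - y + y^2/2] times the cubic Taylor polynomial of [expR y] is at least 1. *)
Lemma expRN_le y : 0 <= y -> expR (- y) <= 1 - y + y ^+ 2 / 2.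
Proof.
move=> y0; have := series_exp_coeff_le_expR 4 y0.
rewrite /series /= big_mkord !big_ord_recr big_ord0 /= /exp_coeff /=.
rewrite add0r expr0 expr1 !divr1 (_ : 2`!%:R = 2) // (_ : 3`!%:R = 6) // => taylor.
have q0 : 0 < 1 - y + y ^+ 2 / 2 by nra.
rewrite expRN -div1r ler_pdivrMr ?expR_gt0 //.
apply: (@le_trans _ _ ((1 + y + y ^+ 2 / 2 + y ^+ 3 / 6) * (1 - y + y ^+ 2 / 2))).
  have -> : (1 + y + y ^+ 2 / 2 + y ^+ 3 / 6) * (1 - y + y ^+ 2 / 2) =
     1 + y ^+ 3 / 6 + y ^+ 4 / 12 + y ^+ 5 / 12 by field.
  by have := exprn_ge0 3 y0; have := exprn_ge0 4 y0; have := exprn_ge0 5 y0; lra.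
by rewrite mulrC ler_wpM2l // ltW.
Qed.

Lemma bernoulli_mgf_le (p l : R) : 0 < p < 1 -> 0 <= l < 3 ->
  (1 - p) * expR (- (l * p)) + p * expR (l * (1 - p)) <=
  expR (p * (1 - p) * (l ^+ 2 / (2 * (1 - l / 3)))).
Proof.
move=> /andP[p0 p1] /andP[l0 l3].
set q := 1 - p; set D := l ^+ 2 / (2 * (1 - l / 3)).
have q0 : 0 < q by rewrite subr_gt0.
have q1 : q < 1 by rewrite /q; lra.
have l3' : 0 < 1 - l / 3 by lra.
have DE : D * (2 * (1 - l / 3)) = l ^+ 2 by rewrite divfK // mulf_neq0 ?gt_eqF.
have D0 : 0 <= D by rewrite divr_ge0 ?exprn_ge0 // ltW ?mulr_gt0.
have halfD : l ^+ 2 / 2 <= D by rewrite -DE; nra.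
clearbody D.
have lowerN : expR (- (l * p)) <= 1 - l * p + p ^+ 2 * D.
  apply: (le_trans (expRN_le (mulr_ge0 l0 (ltW p0)))); rewrite lerD2l.
  by rewrite exprMn mulrAC mulrC ler_wpM2l ?exprn_ge0 // ltW.
have upper : expR (l * q) <= 1 + l * q + q ^+ 2 * D.
  have lq3 : l * q < 3 by nra.
  apply: (le_trans (expR_le_bernstein (mulr_ge0 l0 (ltW q0)) lq3)).
  rewrite lerD2l ler_pdivrMr; last by lra.
  rewrite exprMn -DE mulrC mulrA ler_wpM2l ?mulr_ge0 ?exprn_ge0 ?(ltW q0) //; nra.
apply: le_trans (expR_ge1Dx (p * q * D)).
have -> : 1 + p * q * D =
    q * (1 - l * p + p ^+ 2 * D) + p * (1 + l * q + q ^+ 2 * D) by rewrite /q; ring.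
by rewrite lerD // ler_wpM2l // ltW.
Qed.

End exp_bounds.

Section binomial_tail.
Variables (R : realType) (n : nat).

Lemma sum_set_prod_if (a b : R) :
  \sum_(S : {set 'I_n}) \prod_(i < n) (if i \in S then a else b) = (a + b) ^+ n.
Proof.
rewrite -[n in RHS]card_ord -prodr_const bigA_distr /=.
by apply: eq_bigl => S.
Qed.

(* [P(Bin(n, p) >= n s)], as a sum over the possible sets of successes. *)
Definition binomial_tail (p s : R) : R :=
  \sum_(S : {set 'I_n} | n%:R * s <= #|S|%:R)
    \prod_(i < n) (if i \in S then p else 1 - p).

Lemma sum_binomial_lt (p s : R) :
  \sum_(S : {set 'I_n} | #|S|%:R < n%:R * s)
    \prod_(i < n) (if i \in S then p else 1 - p) = 1 - binomial_tail p s.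
Proof.
have total := sum_set_prod_if p (1 - p).
rewrite subrKC expr1n (bigID (fun S : {set 'I_n} => #|S|%:R < n%:R * s)) /= in total.
rewrite -[1 in RHS]total [binomial_tail _ _](eq_bigl _ _ (fun S => leNgt _ _)).
by rewrite addrK.
Qed.

Lemma binomial_tail_chernoff (p s l : R) : 0 <= p <= 1 -> 0 <= l ->
  binomial_tail p s <= (expR (- (l * s)) * (p * expR l + (1 - p))) ^+ n.
Proof.
move=> /andP[p0 p1] l0.
pose w (S : {set 'I_n}) := \prod_(i < n) (if i \in S then p else 1 - p).
have w0 S : 0 <= w S by apply: prodr_ge0 => i _; case: ifP; rewrite ?subr_ge0.
have -> : (expR (- (l * s)) * (p * expR l + (1 - p))) ^+ n =
    \sum_(S : {set 'I_n}) w S * expR (l * (#|S|%:R - n%:R * s)).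
  rewrite exprMn -expRM_natl mulrC -sum_set_prod_if mulr_suml.
  apply: eq_bigr => S _; rewrite mulrBr expRD expRM_natr mulrA.
  congr (_ * _); last by congr expR; ring.
  rewrite -prodr_const (big_mkcond (fun i => i \in S)) -big_split /=.
  by apply: eq_bigr => i _; case: ifP; rewrite ?mulr1.
rewrite [X in X <= _]big_mkcond /=; apply: ler_sum => S _.
case: ifP => [tailS|_]; last by rewrite mulr_ge0 ?expR_ge0.
rewrite ler_peMr ?w0 //; apply: le_trans (expR_ge1Dx _).
by rewrite lerDl mulr_ge0 // subr_ge0.
Qed.

Lemma binomial_tail_bernstein (p t : R) : 0 < p < 1 -> 0 < t ->
  binomial_tail p (p + t) <=
  expR (- (n%:R * t ^+ 2 / (2 * p * (1 - p) + 2 * t / 3))).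
Proof.
move=> /andP[p0 p1] t0; set v := p * (1 - p).
have v0 : 0 < v by rewrite mulr_gt0 // subr_gt0.
(* The Chernoff parameter minimising the Bernstein exponent. *)
pose l := t / (v + t / 3).
have l0 : 0 <= l by rewrite /l divr_ge0 //; lra.
have l3 : l < 3 by rewrite /l ltr_pdivrMr; lra.
have p01 : 0 <= p <= 1 by apply/andP; split; lra.
apply: (le_trans (binomial_tail_chernoff _ p01 l0)).
have -> : - (n%:R * t ^+ 2 / (2 * p * (1 - p) + 2 * t / 3)) =
    n%:R * (- (l * t) + v * (l ^+ 2 / (2 * (1 - l / 3)))).
  by rewrite /l /v; field; rewrite !gt_eqF //; nra.
have mgf0 : 0 <= p * expR l + (1 - p).
  by rewrite addr_ge0 ?mulr_ge0 ?expR_ge0 ?subr_ge0 ?ltW.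
rewrite expRM_natl lerXn2r ?nnegrE ?mulr_ge0 ?expR_ge0 //.
have -> : expR (- (l * (p + t))) * (p * expR l + (1 - p)) =
    expR (- (l * t)) * ((1 - p) * expR (- (l * p)) + p * expR (l * (1 - p))).
  have splitN : expR (- (l * (p + t))) = expR (- (l * t)) * expR (- (l * p)).
    by rewrite -expRD; congr expR; ring.
  have split1 : expR (l * (1 - p)) = expR (- (l * p)) * expR l.
    by rewrite -expRD; congr expR; ring.
  by rewrite splitN split1; ring.
by rewrite expRD ler_wpM2l ?expR_ge0 // bernoulli_mgf_le ?p0 ?p1 ?l0 ?l3.
Qed.

Lemma binomial_tail0 s : (0 < n)%N -> 0 < s -> binomial_tail 0 s = 0.
Proof.
move=> n_gt0 s0; apply: big1 => S tailS.
have /card_gt0P[i iS] : (0 < #|S|)%N.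
  by rewrite -(ltr0n R) (lt_le_trans _ tailS) // mulr_gt0 ?ltr0n.
by rewrite (bigD1 i) //= iS mul0r.
Qed.

Lemma binomial_tail_le (p t delta : R) : 0 < p < 1 -> 0 < t -> 0 < delta ->
  2 * ln delta^-1 * (p * (1 - p) + t / 3) <= n%:R * t ^+ 2 ->
  binomial_tail p (p + t) <= delta.
Proof.
move=> p01 t0 delta0 exponent_ge; have /andP[p0 p1] := p01.
apply: (le_trans (binomial_tail_bernstein p01 t0)).
rewrite -[leRHS]lnK ?posrE // ler_expR lerNl -lnV ?posrE //.
rewrite ler_pdivlMr; first by lra.
by apply: addr_gt0; [rewrite mulr_gt0 ?mulr_gt0 // subr_gt0 | lra].
Qed.

Lemma bernoulli_var_le (p v : R) : 0 <= p <= 1 -> 0 <= v <= 1 ->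
  p * (1 - p) <= v * (1 - v) + `|p - v|.
Proof.
move=> /andP[p0 p1] /andP[v0 v1].
have -> : p * (1 - p) = v * (1 - v) + (p - v) * (1 - p - v) by ring.
rewrite lerD2l (le_trans (ler_norm _)) // normrM ler_piMr //.
by rewrite ler_norml; apply/andP; split; lra.
Qed.

End binomial_tail.

Section deviation_bound.
Variable R : realType.

Lemma sqr_ge_affine (beta C v : R) : 0 <= beta -> 0 <= C -> 0 < v ->
  (beta * v + C <= v ^+ 2) = ((beta + Num.sqrt (beta ^+ 2 + 4 * C)) / 2 <= v).
Proof.
move=> beta0 C0 v0; set z := Num.sqrt _.
have z2 : z ^+ 2 = beta ^+ 2 + 4 * C by rewrite sqr_sqrtr //; nra.
have beta_le_z : beta <= z.
  by rewrite -[leLHS]ger0_norm // -sqrtr_sqr ler_sqrt; nra.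
have factor : (v - (beta - z) / 2) * (v - (beta + z) / 2) = v ^+ 2 - (beta * v + C).
  transitivity (v ^+ 2 - beta * v + (beta ^+ 2 - z ^+ 2) / 4); first by field.
  by rewrite z2; field.
by rewrite -subr_ge0 -factor pmulr_rge0 ?subr_ge0 //; lra.
Qed.

Variables (a Q K : R).

Definition bound_at (e : R) : R :=
  (1 - e)^-1 * (e * a + Num.sqrt Q + (2 / 3 + (2 * e)^-1) * K).

(* With [r := e (a + v) + K/(2e)] one has [v = sqrt Q + 2K/3 + r], and
   AM-GM gives [r^2 >= 2K(a + v)]. *)
Lemma bound_at_prop e : 0 <= a -> 0 <= Q -> 0 < K -> 0 < e < 1 ->
  0 < bound_at e /\
  Q + 2 * K * (a + bound_at e) + 2 * K * bound_at e / 3 <= bound_at e ^+ 2.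
Proof.
move=> a0 Q0 K0 /andP[e0 e1]; set v := bound_at e; set sq := Num.sqrt Q.
have sq0 : 0 <= sq by apply: sqrtr_ge0.
have sqE : sq ^+ 2 = Q by rewrite sqr_sqrtr.
have hv : (1 - e) * v = e * a + sq + (2 / 3 + (2 * e)^-1) * K.
  by rewrite /v /bound_at mulrA divff ?mul1r // gt_eqF // subr_gt0.
set iv := (2 * e)^-1 in hv.
have iv0 : 0 < iv by rewrite /iv invr_gt0; lra.
have ivE : 2 * e * iv = 1 by rewrite /iv divff // gt_eqF //; lra.
clearbody v iv sq.
have v0 : 0 < v.
  have ea0 := mulr_ge0 (ltW e0) a0.
  have cK0 : 0 < (2 / 3 + iv) * K by rewrite mulr_gt0 //; lra.
  have : 0 < (1 - e) * v by rewrite hv; lra.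
  by rewrite pmulr_rgt0 // subr_gt0.
split => //.
set r := e * (a + v) + K * iv.
have r0 : 0 <= r by rewrite /r addr_ge0 ?mulr_ge0 ?addr_ge0 // ltW.
have vE : v = sq + 2 * K / 3 + r by rewrite /r; nra.
have amgm : 2 * K * (a + v) <= r ^+ 2.
  have : 0 <= (e * (a + v) - K * iv) ^+ 2 by apply: sqr_ge0.
  have : K * (a + v) * (2 * e * iv) = K * (a + v) by rewrite ivE mulr1.
  rewrite /r; nra.
clearbody r.
have : sq ^+ 2 + r ^+ 2 + 2 * K * v / 3 <= v ^+ 2.
  have sq_le : sq * sq <= v * sq by rewrite ler_wpM2r //; lra.
  have r_le : r * r <= v * r by rewrite ler_wpM2r //; lra.
  have -> : v ^+ 2 = v * sq + v * (2 * K / 3) + v * r by rewrite expr2 {1}vE; ring.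
  rewrite !expr2; lra.
rewrite sqE; lra.
Qed.

Lemma inf_bound_at_prop : 0 <= a -> 0 <= Q -> 0 < K ->
  let b := inf [set bound_at e | e in `]0, 1[%classic]%classic in
  0 < b /\ Q + 2 * K * (a + b) + 2 * K * b / 3 <= b ^+ 2.
Proof.
move=> a0 Q0 K0 b; set beta := 2 * K + 2 * K / 3; set C := Q + 2 * K * a.
have beta0 : 0 < beta by rewrite /beta; lra.
have C0 : 0 <= C by rewrite /C; nra.
set r := (beta + Num.sqrt (beta ^+ 2 + 4 * C)) / 2.
have r0 : 0 < r by rewrite /r; have := sqrtr_ge0 (beta ^+ 2 + 4 * C); lra.
have r_le_b : r <= b.
  apply: lb_le_inf.
    by exists (bound_at 2^-1), 2^-1 => //=; rewrite in_itv /=; lra.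
  move=> v [e]; rewrite /= in_itv /= => /(bound_at_prop a0 Q0 K0)[v0 vH] <-.
  by rewrite -sqr_ge_affine ?(ltW beta0) //; rewrite /beta /C; lra.
have b0 : 0 < b by exact: lt_le_trans r_le_b.
split => //; have := r_le_b; rewrite -sqr_ge_affine ?(ltW beta0) // /beta /C; lra.
Qed.

End deviation_bound.

Section empirical_quantiles.
Variables (R : realType) (n : nat) (xs : 'I_n -> R).
Hypothesis n_gt0 : (0 < n)%N.

Lemma emp_cdfE x : emp_cdf xs x = n%:R^-1 * #|[set i | xs i <= x]|%:R.
Proof.
rewrite /emp_cdf -big_mkcond /= -sum1_card natr_sum; congr (_ * _).
by apply: eq_bigl => i; rewrite inE.
Qed.

Lemma emp_cdf_eq1 : exists x, emp_cdf xs x = 1.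
Proof.
exists (\big[Order.max/0]_i xs i); rewrite emp_cdfE.
have -> : [set i | xs i <= \big[Order.max/0]_j xs j] = [set: 'I_n].
  by apply/setP => i; rewrite !inE le_bigmax.
by rewrite cardsT card_ord mulVf // pnatr_eq0 -lt0n.
Qed.

Lemma emp_cdf_pos_has_lbound : has_lbound [set x | 0 < emp_cdf xs x]%classic.
Proof.
exists (\big[Order.min/0]_i xs i) => x /=; rewrite emp_cdfE.
apply: contraTT; rewrite -ltNge -leNgt => x_lt_min.
rewrite eq_card0 ?mulr0 // => i; rewrite !inE; apply/negbTE; rewrite -ltNge.
exact: lt_le_trans x_lt_min (bigmin_le _ _ _).
Qed.

Lemma emp_cdf_right_gap c :
  exists2 e, c < e & [set i | xs i < e] = [set i | xs i <= c].
Proof.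
have /filter_ex[e [ce He]] :
    \forall e \near at_right c, c < e /\ forall i, (xs i < e) = (xs i <= c).
  apply/near_andP; split; first exact: nbhs_right_gt.
  apply: filter_forall => i; have [xc|cx] := leP (xs i) c.
    by near=> e; rewrite (le_lt_trans xc) //; near: e; exact: nbhs_right_gt.
  by near=> e; apply/negbTE; rewrite -leNgt ltW //; near: e; exact: nbhs_right_lt.
by exists e => //; apply/setP => i; rewrite !inE He.
Unshelve. all: by end_near.
Qed.

Lemma emp_cdf_left_gap c :
  exists2 e, e < c & [set i | xs i <= e] = [set i | xs i < c].
Proof.
have /filter_ex[e [ec He]] :
    \forall e \near at_left c, e < c /\ forall i, (xs i <= e) = (xs i < c).
  apply/near_andP; split; first exact: nbhs_left_lt.
  apply: filter_forall => i; have [xc|cx] := ltP (xs i) c.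
    by near=> e; apply: ltW; near: e; exact: nbhs_left_gt.
  by near=> e; apply/negbTE; rewrite -ltNge (lt_le_trans _ cx) //; near: e;
    exact: nbhs_left_lt.
by exists e => //; apply/setP => i; rewrite !inE He.
Unshelve. all: by end_near.
Qed.

Lemma emp_cdf_level_set_bounds (P : R -> Prop) : (forall x, P x -> 0 < emp_cdf xs x) ->
  (forall x, emp_cdf xs x = 1 -> P x) -> has_lbound P /\ nonempty P.
Proof.
move=> P_pos P_one; have [m lb_m] := emp_cdf_pos_has_lbound.
have [x Fx1] := emp_cdf_eq1.
by split; [exists m => y /P_pos /lb_m | exists x; apply: P_one].
Qed.

Lemma Qplus_emp_cdf_le g c : 0 < g < 1 ->
  (Qplus g (emp_cdf xs) <= c) = (g < emp_cdf xs c).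
Proof.
move=> /andP[g0 g1].
have [lbA [x0 Ax0]] : has_lbound [set x | g < emp_cdf xs x]%classic /\
    nonempty [set x | g < emp_cdf xs x]%classic.
  by apply: emp_cdf_level_set_bounds => x /=; [exact: lt_trans | move=> ->].
apply/idP/idP => [Q_le_c|g_lt_Fc]; last exact: ge_inf.
rewrite ltNge; apply/negP => Fc_le_g.
have [e ce gap] := emp_cdf_right_gap c.
suff : e <= Qplus g (emp_cdf xs) by move=> /le_trans /(_ Q_le_c); rewrite leNgt ce.
apply: lb_le_inf; first by exists x0.
move=> x /= g_lt_Fx; rewrite leNgt; apply/negP => x_lt_e.
suff : emp_cdf xs x <= emp_cdf xs c by rewrite leNgt (le_lt_trans Fc_le_g g_lt_Fx).
rewrite !emp_cdfE ler_wpM2l ?invr_ge0 // ler_nat -gap subset_leq_card //.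
by apply/fintype.subsetP => i; rewrite !inE => /le_lt_trans; apply.
Qed.

Lemma Qminus_emp_cdf_ge g c : 0 < g < 1 ->
  (c <= Qminus g (emp_cdf xs)) = (#|[set i | xs i < c]|%:R < n%:R * g).
Proof.
move=> /andP[g0 g1]; have n0 : 0 < n%:R :> R by rewrite ltr0n.
have [lbA [x0 Ax0]] : has_lbound [set x | g <= emp_cdf xs x]%classic /\
    nonempty [set x | g <= emp_cdf xs x]%classic.
  apply: emp_cdf_level_set_bounds => x /=; first exact: lt_le_trans.
  by move=> ->; exact: ltW.
have Fmul x : (g <= emp_cdf xs x) = (n%:R * g <= #|[set i | xs i <= x]|%:R).
  by rewrite emp_cdfE ler_pdivlMl.
apply/idP/idP => [c_le_Q|card_lt].
  rewrite ltNge; apply/negP => card_ge.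
  have [e ec gap] := emp_cdf_left_gap c.
  have : Qminus g (emp_cdf xs) <= e by apply: ge_inf => //=; rewrite Fmul gap.
  by move=> /(le_trans c_le_Q); rewrite leNgt ec.
apply: lb_le_inf; first by exists x0.
move=> x /=; rewrite Fmul; apply: contraTT; rewrite -!ltNge => x_lt_c.
apply: le_lt_trans card_lt; rewrite ler_nat subset_leq_card //.
by apply/fintype.subsetP => i; rewrite !inE => /le_lt_trans; apply.
Qed.

Lemma lt_emp_cdfE g c :
  (g < emp_cdf xs c) = (#|[set i | c < xs i]|%:R < n%:R * (1 - g)).
Proof.
have card_split : #|[set i | xs i <= c]| + #|[set i | c < xs i]| = n.
  rewrite -[in RHS](card_ord n) -(cardsC [set i | xs i <= c]); congr (_ + _).
  by apply: eq_card => i; rewrite !inE ltNge.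
have n0 : 0 < n%:R :> R by rewrite ltr0n.
have := congr1 (fun k => k%:R : R) card_split; rewrite natrD => {}card_split.
by rewrite emp_cdfE ltr_pdivlMl //; apply/idP/idP; lra.
Qed.

End empirical_quantiles.

Section uniform01.
Local Open Scope classical_set_scope.
Variable R : realType.
Local Notation U01 := (uniform_prob (@ltr01 R)).

Lemma measurable_gtr (c : R) : measurable [set y | c < y].
Proof.
rewrite (_ : [set y | c < y] = `]c, +oo[); first exact: measurable_itv.
by apply/seteqP; split => y /=; rewrite in_itv /= andbT.
Qed.

Lemma measurable_ltr (c : R) : measurable [set y | y < c].
Proof.
rewrite (_ : [set y | y < c] = `]-oo, c[); first exact: measurable_itv.
by apply/seteqP; split => y /=; rewrite in_itv.
Qed.

Lemma uniform_prob01E (A : set R) : measurable A ->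
  U01 A = lebesgue_measure (A `&` `[0, 1]).
Proof.
move=> mA; rewrite /uniform_prob integral_uniform_pdf.
rewrite (eq_integral (fun=> 1%:E)); last first.
  by move=> x; rewrite inE /= in_itv /= /uniform_pdf => -[_ ->]; rewrite subr0 invr1.
by rewrite integral_cst /= ?mul1e //; apply: measurableI.
Qed.

Lemma uniform_prob01_gt c : 0 <= c ->
  U01 [set y | c < y] = (Num.max 0 (1 - c))%:E.
Proof.
move=> c0; rewrite (uniform_prob01E (measurable_gtr c)); have [c1|c1] := ltP c 1.
  have -> : [set y | c < y] `&` `[0, 1] = `]c, 1]%classic.
    apply/seteqP; split => y /=; rewrite !in_itv /=.
      by move=> [cy /andP[_ y1]]; rewrite cy y1.
    by move=> /andP[cy y1]; split => //; rewrite y1 andbT; lra.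
  by rewrite lebesgue_measure_itv /= lte_fin c1 max_r // subr_ge0 ltW.
have -> : [set y | c < y] `&` `[0, 1] = set0.
  by apply/seteqP; split => y //=; rewrite !in_itv /= => -[cy /andP[_ y1]]; lra.
by rewrite measure0 max_l // subr_le0.
Qed.

Lemma uniform_prob01_lt c : c <= 1 ->
  U01 [set y | y < c] = (Num.max 0 c)%:E.
Proof.
move=> c1; rewrite (uniform_prob01E (measurable_ltr c)); have [c0|c0] := ltP 0 c.
  have -> : [set y | y < c] `&` `[0, 1] = `[0, c[%classic.
    apply/seteqP; split => y /=; rewrite !in_itv /=.
      by move=> [yc /andP[y0 _]]; rewrite yc y0.
    by move=> /andP[y0 yc]; split => //; rewrite y0 /=; lra.
  by rewrite lebesgue_measure_itv /= lte_fin c0 -EFinD subr0.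
have -> : [set y | y < c] `&` `[0, 1] = set0.
  by apply/seteqP; split => y //=; rewrite !in_itv /= => -[yc /andP[y0 _]]; lra.
by rewrite measure0.
Qed.

End uniform01.

Section independent_hits.
Local Open Scope classical_set_scope.
Context d (T : measurableType d) (R : realType) (P : probability T R) (n : nat)
  (X : 'I_n -> {RV P >-> R}).
Hypothesis indep : mutually_independent P (fun i => (X i : T -> R)).
Variables (b : R -> bool) (p : R).
Hypothesis mb : measurable [set y | b y].
Hypothesis Pb : forall i, P (X i @^-1` [set y | b y]) = p%:E.

Definition hits (w : T) : {set 'I_n} := [set i | b (X i w)]%SET.

Lemma hits_eqE S : [set w | hits w = S] =
  \bigcap_(i in setT) (X i @^-1` (if i \in S then [set y | b y] else ~` [set y | b y])).
Proof.
apply/seteqP; split => w /=.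
  by move=> <- i _; rewrite inE; case: ifP => /= ->.
move=> hw; apply/setP => i; rewrite inE; have := hw i I.
by case: ifP => _ /= => [|/negP/negbTE].
Qed.

Lemma measurable_hits_eq S : measurable [set w | hits w = S].
Proof.
rewrite hits_eqE; apply: fin_bigcap_measurable; first exact: finite_finset.
by move=> i _; apply: measurable_funPTI; case: ifP => _ //; exact: measurableC.
Qed.

Lemma prob_hits_eq S :
  P [set w | hits w = S] = (\prod_(i < n) (if i \in S then p else 1 - p))%:E.
Proof.
rewrite hits_eqE indep; last by move=> i; case: ifP => _ //; exact: measurableC.
rewrite -prodEFin; apply: eq_bigr => i _; case: ifP => _ //.
by rewrite -preimage_setC probability_setC ?Pb //; exact: measurable_funPTI.
Qed.

Lemma prob_card_hits (phi : pred nat) : P [set w | phi #|hits w|] =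
  (\sum_(S : {set 'I_n} | phi #|S|) \prod_(i < n) (if i \in S then p else 1 - p))%:E.
Proof.
have -> : [set w | phi #|hits w|] =
    \bigcup_(S in [set S : {set 'I_n} | phi #|S|]) [set w | hits w = S].
  by apply/seteqP; split => w /=; [exists (hits w) | move=> [S hS ->]].
rewrite measure_fin_bigcup; last 3 first.
- exact: finite_finset.
- by move=> S S' _ _ [w [/= <- <-]].
- by move=> S _; exact: measurable_hits_eq.
rewrite (fsbigE (seq.filter (fun S : {set 'I_n} => phi #|S|) (index_enum _)));
  last 3 first.
- exact/filter_uniq/index_enum_uniq.
- by move=> S /=; rewrite mem_filter => /andP[].
- by move=> S /= hS; rewrite mem_filter mem_index_enum andbT hS.
rewrite big_filter_cond -sumEFin; apply: eq_big => S.
  by case phiS: (phi _) => //=; apply/mem_set.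
by move=> _; exact: prob_hits_eq.
Qed.

Lemma prob_card_hits_lt s :
  P [set w | #|hits w|%:R < n%:R * s] = (1 - binomial_tail n p s)%:E.
Proof. by rewrite (prob_card_hits (fun k => k%:R < n%:R * s)) sum_binomial_lt. Qed.

Lemma prob_card_hits_lt_bernstein s v t delta : (0 < n)%N -> 0 < s < 1 -> 0 <= v <= 1 ->
  0 < t -> 0 < delta < 1 -> p = Num.max 0 (s - t) ->
  2 * ln delta^-1 * (v * (1 - v) + `|s - v| + t + t / 3) <= n%:R * t ^+ 2 ->
  ((1 - delta)%:E <= P [set w | (#|hits w|%:R < n%:R * s)%R])%E.
Proof.
move=> n_gt0 /andP[s0 s1] v01 t0 /andP[delta0 delta1] pE exponent_ge.
rewrite prob_card_hits_lt lee_fin lerD2l lerN2.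
have [st_le0|st_gt0] := leP (s - t) 0.
  by rewrite pE max_l // binomial_tail0 // ltW.
rewrite pE max_r ?(ltW st_gt0) // -{2}(subrK t s); apply: binomial_tail_le => //.
  by apply/andP; split; lra.
have ln0 : 0 <= 2 * ln delta^-1 by rewrite mulr_ge0 // ln_ge0 // invf_ge1 // ltW.
apply: le_trans exponent_ge; rewrite ler_wpM2l // lerD2r.
have p01 : 0 <= s - t <= 1 by apply/andP; split; lra.
apply: le_trans (bernoulli_var_le p01 v01) _; rewrite -[leRHS]addrA lerD2l.
rewrite (_ : s - t - v = (s - v) - t); last by ring.
by apply: le_trans (ler_normB _ _) _; rewrite (gtr0_norm t0).
Qed.

End independent_hits.

Section uniform_sample_quantiles.
Local Open Scope classical_set_scope.
Context d (T : measurableType d) (R : realType) (P : probability T R) (n : nat)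
  (X : 'I_n -> {RV P >-> R}).
Hypothesis n_gt0 : (0 < n)%N.
Hypothesis indep : mutually_independent P (fun i => (X i : T -> R)).
Hypothesis unif : forall i (A : set R), measurable A ->
  distribution P (X i) A = uniform_prob (@ltr01 R) A.
Variables (g g' delta b : R).
Hypotheses (hg : 0 < g < 1) (hg' : 0 < g' < 1) (hdelta : 0 < delta < 1).
Hypothesis b_gt0 : 0 < b.
Hypothesis b_bernstein :
  2 * ln delta^-1 * (g' * (1 - g') + `|g - g'| + b + b / 3) <= n%:R * b ^+ 2.

Lemma Qplus_deviation_whp :
  ((1 - delta)%:E <= P [set w | (Qplus g (emp_cdf (fun i => X i w)) - g <= b)%R])%E.
Proof.
have /andP[g0 g1] := hg; have /andP[g'0 g'1] := hg'.
have Pgt i : P (X i @^-1` [set y | b + g < y]) = (Num.max 0 (1 - g - b))%:E.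
  rewrite -[LHS]/(distribution P (X i) _) unif; last exact: measurable_gtr.
  rewrite uniform_prob01_gt; last by rewrite addr_ge0 // ltW.
  by congr (Num.max 0 _)%:E; ring.
have -> : [set w | Qplus g (emp_cdf (fun i => X i w)) - g <= b] =
    [set w | #|hits X (fun y => b + g < y) w|%:R < n%:R * (1 - g)].
  by apply/seteqP; split => w /=; rewrite lerBlDr Qplus_emp_cdf_le // lt_emp_cdfE.
apply: (prob_card_hits_lt_bernstein indep (measurable_gtr _) Pgt
  (v := 1 - g') (t := b)) => //.
- by apply/andP; split; lra.
- by apply/andP; split; lra.
- rewrite (_ : 1 - g - (1 - g') = g' - g); last by ring.
  by rewrite distrC (_ : (1 - g') * (1 - (1 - g')) = g' * (1 - g')) //; ring.
Qed.

Lemma Qminus_deviation_whp :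
  ((1 - delta)%:E <= P [set w | (g - Qminus g (emp_cdf (fun i => X i w)) <= b)%R])%E.
Proof.
have /andP[g0 g1] := hg; have /andP[g'0 g'1] := hg'.
have Plt i : P (X i @^-1` [set y | y < g - b]) = (Num.max 0 (g - b))%:E.
  rewrite -[LHS]/(distribution P (X i) _) unif; last exact: measurable_ltr.
  by rewrite uniform_prob01_lt //; have := b_gt0; lra.
have -> : [set w | g - Qminus g (emp_cdf (fun i => X i w)) <= b] =
    [set w | #|hits X (fun y => y < g - b) w|%:R < n%:R * g].
  by apply/seteqP; split => w /=; rewrite lerBlDr -lerBlDl Qminus_emp_cdf_ge.
apply: (prob_card_hits_lt_bernstein indep (measurable_ltr _) Plt
  (v := g') (t := b)) => //.
by apply/andP; split; lra.
Qed.

End uniform_sample_quantiles.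

Local Open Scope classical_set_scope.

Theorem lemma3 (d : measure_display) (T : measurableType d) (R : realType)
    (P : probability T R) (n : nat) (X : 'I_n -> {RV P >-> R})
    (n_gt0 : (0 < n)%N)
    (indep : mutually_independent P (fun i => (X i : T -> R)))
    (unif : forall i (A : set R), measurable A ->
       distribution P (X i) A = uniform_prob (@ltr01 R) A)
    (g g' delta : R)
    (hg : 0 < g < 1) (hg' : 0 < g' < 1) (hdelta : 0 < delta < 1) :
  let bound := inf [set (1 - e)^-1 *
        (e * `|g - g'|
         + Num.sqrt (2 * g' * (1 - g') * ln delta^-1 / n%:R)
         + (2 / 3 + (2 * e)^-1) * (ln delta^-1 / n%:R))
      | e in `]0, 1[%classic] in
  ((1 - delta)%:E <=
     P [set w | (Qplus g (emp_cdf (fun i => X i w)) - g <= bound)%R])%E /\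
  ((1 - delta)%:E <=
     P [set w | (g - Qminus g (emp_cdf (fun i => X i w)) <= bound)%R])%E.
Proof.
move=> bound; have /andP[delta0 delta1] := hdelta; have /andP[g'0 g'1] := hg'.
have n0 : 0 < n%:R :> R by rewrite ltr0n.
have ln0 : 0 < ln delta^-1 by rewrite ln_gt0 // invf_gt1.
have Q0 : 0 <= 2 * g' * (1 - g') * ln delta^-1 / n%:R.
  by rewrite divr_ge0 ?mulr_ge0 ?subr_ge0 // ?ltW.
have [b_gt0 bound_ok] := inf_bound_at_prop (normr_ge0 (g - g')) Q0 (divr_gt0 ln0 n0).
rewrite -/bound in b_gt0 bound_ok.
have b_bernstein :
    2 * ln delta^-1 * (g' * (1 - g') + `|g - g'| + bound + bound / 3) <=
    n%:R * bound ^+ 2.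
  by rewrite -ler_pdivrMl //; apply: le_trans bound_ok; lra.
split.
  exact (Qplus_deviation_whp n_gt0 indep unif hg hg' hdelta b_gt0 b_bernstein).
exact (Qminus_deviation_whp n_gt0 indep unif hg hg' hdelta b_gt0 b_bernstein).
Qed.
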